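(* Let $G$ be a strongly connected digraph. The set-valued map $f_{\mathrm{imcor}}$ is closed on $\operatorname{Adj}(G)$: for every $D\in\operatorname{Adj}(G)$ and all sequences $(D_k)$, $(C_k)$ in $\operatorname{Adj}(G)$ with $D_k\to D$, $C_k\to C$ and $C_k\in f_{\mathrm{imcor}}(D_k)$ for all $k$, we have $C\in f_{\mathrm{imcor}}(D)$.
   Context: A digraph $G=(V,E)$, $V=\{v_1,\dots,v_n\}$, $E\subseteq V\times V$; strongly connected means a directed path exists between every ordered pair of distinct vertices. $\operatorname{Adj}(G)$ is the set of $A=(a_{ij})\in\mathbb{R}^{n\times n}_{\geq0}$ with $a_{ij}>0$ iff $(v_i,v_j)\in E$. Imbalance: $\omega(v_i)=\sum_j a_{ji}-\sum_j a_{ij}$. For $A\in\operatorname{Adj}(G)$, $a_i^*=\min\{a_{ik}:k\neq i,\ a_{ik}\neq0\}$ and $J_i^*=\{j\neq i: a_{ij}=a_i^*\}$. $f_{\mathrm{imcor}}(A)$ is the set of $B\in\operatorname{Adj}(G)$ such that for each $i$ there is $j_i^*\in J_i^*$ with $b_{ij}=a_{ij}+\omega(v_i)$ if $\omega(v_i)>0$ and $j=j_i^*$, and $b_{ij}=a_{ij}$ otherwise (imbalances computed w.r.t. $A$). *)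

From HB Require Import structures.
From mathcomp Require Import all_boot all_order all_algebra.
From mathcomp Require Import all_classical all_reals all_analysis.
Set Implicit Arguments. Unset Strict Implicit. Unset Printing Implicit Defensive.
Import Order.TTheory GRing.Theory Num.Theory.
Local Open Scope ring_scope.

Definition strongly_connected (n : nat) (E : rel 'I_n) : Prop :=
  forall i j : 'I_n, i != j -> connect E i j.

Definition inAdj (R : realType) (n : nat) (E : rel 'I_n) (A : 'M[R]_n) : Prop :=
  forall i j : 'I_n, 0 <= A i j /\ (0 < A i j <-> E i j).

Definition imbalance (R : realType) (n : nat) (A : 'M[R]_n) (i : 'I_n) : R :=
  \sum_(j < n) A j i - \sum_(j < n) A i j.

(* J_i^* = { j <> i : a_ij = a_i^* }, where a_i^* = min { a_ik : k <> i, a_ik <> 0 }.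
   j is in J_i^* iff a_ij belongs to that set and is <= all its elements. *)
Definition inJstar (R : realType) (n : nat) (A : 'M[R]_n) (i j : 'I_n) : Prop :=
  [/\ j != i, A i j != 0 &
      forall k : 'I_n, k != i -> A i k != 0 -> A i j <= A i k].

Definition in_fimcor (R : realType) (n : nat) (E : rel 'I_n)
    (A B : 'M[R]_n) : Prop :=
  inAdj E B /\
  forall i : 'I_n, exists2 js : 'I_n, inJstar A i js &
    forall j : 'I_n,
      B i j = if (0 < imbalance A i) && (j == js)
              then A i j + imbalance A i else A i j.

From HB Require Import structures.
From mathcomp Require Import all_boot all_order all_algebra.
From mathcomp Require Import all_classical all_reals all_analysis.
Import Order.TTheory GRing.Theory Num.Theory.
Import numFieldTopology.Exports numFieldNormedType.Exports.
Local Open Scope classical_set_scope.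
Local Open Scope ring_scope.

(* Written as b_ij = a_ij + [j = j_i^*] max(0, omega(v_i)), the corrected entry
   is a continuous function of A once j_i^* is fixed, with no case distinction on
   the sign of the imbalance.  As there are finitely many candidates, one index j
   is chosen as j_i^* for infinitely many k; along those k the entry formula, the
   minimality defining J_i^* and C_k >= D_k are closed conditions and pass to the
   limit.  The hypothesis D in Adj(G) is needed because J_i^* only ranges over
   nonzero entries: it makes D have the same support as every D_k. *)

Definition frequently {T : Type} (F : set_system T) (P : T -> Prop) :=
  ~ \forall x \near F, ~ P x.

Section Frequently.
Context {T : Type} {F : set_system T} {FF : ProperFilter F}.

Lemma frequentlyW {P : T -> Prop} : (forall x, P x) -> frequently F P.
Proof. by move=> P_ nP; have [x /(_ (P_ x))] := filter_ex nP. Qed.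

Lemma frequently_ex {P : T -> Prop} : frequently F P -> exists x, P x.
Proof. by move=> fP; apply: contrapT => /forallNP nP; apply: fP; apply: nearW. Qed.

Lemma frequentlyS {P Q : T -> Prop} :
  (forall x, P x -> Q x) -> frequently F P -> frequently F Q.
Proof. by move=> PQ fP nQ; apply: fP; apply: filterS nQ => x nQx /PQ. Qed.

Lemma frequently_constant {I : finType} (s : T -> I) :
  exists i, frequently F (fun x => s x = i).
Proof.
apply: contrapT => /forallNP /(_ _) /contrapT nearN.
by have [x /(_ (s x))] := filter_ex (filter_forall _ nearN).
Qed.

Lemma frequently_le_lim {R : realFieldType} {u v : T -> R} {a b : R} :
  u @ F --> a -> v @ F --> b -> frequently F (fun x => u x <= v x) -> a <= b.
Proof.
move=> ua vb uv; rewrite leNgt; apply/negP => ba; apply: uv.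
have /(cvgr_gt (a - b) (cvgB ua vb)) : 0 < a - b by rewrite subr_gt0.
by apply: filterS => x; rewrite subr_gt0 ltNge => /negP.
Qed.

Lemma frequently_eq_lim {R : realFieldType} {u v : T -> R} {a b : R} :
  u @ F --> a -> v @ F --> b -> frequently F (fun x => u x = v x) -> a = b.
Proof.
move=> ua vb uv; apply/eqP; rewrite eq_le.
by rewrite (frequently_le_lim ua vb) ?(frequently_le_lim vb ua) //;
  apply: (frequentlyS _ uv) => x ->.
Qed.

End Frequently.

Lemma if_pos_addE (R : realDomainType) (a w : R) (b : bool) :
  (if (0 < w) && b then a + w else a) = a + (if b then Num.max 0 w else 0).
Proof.
case: b; rewrite ?andbT ?andbF ?addr0 //.
by case: ltP; rewrite ?addr0.
Qed.

Lemma cvg_mx_entry {T : Type} {F : set_system T} {FF : Filter F}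
    {K : numFieldType} {m p : nat} {M : T -> 'M[K]_(m, p)} {A : 'M[K]_(m, p)}
    (i : 'I_m) (j : 'I_p) :
  M @ F --> A -> (fun x => M x i j) @ F --> A i j.
Proof. by move=> MA; exact: (cvg_comp _ _ MA (@coord_continuous K m p i j A)). Qed.

Section ImbalanceCorrection.
Context {R : realType} {n : nat}.
Implicit Types (A B C D : 'M[R]_n) (E : rel 'I_n).

Definition imcor_entry A (i js j : 'I_n) : R :=
  A i j + (if j == js then Num.max 0 (imbalance A i) else 0).

Lemma in_fimcorE {E A B} :
  in_fimcor E A B <->
  inAdj E B /\ forall i, exists2 js, inJstar A i js &
                           forall j, B i j = imcor_entry A i js j.
Proof.
rewrite /in_fimcor /imcor_entry.
split=> -[AdjB rows]; split=> // i; have [js Jjs Bj] := rows i;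
  by exists js => // j; rewrite Bj if_pos_addE.
Qed.

Lemma in_fimcor_le {E A B} : in_fimcor E A B -> forall i j, A i j <= B i j.
Proof.
case/in_fimcorE=> _ rows i j; have [js _ ->] := rows i; rewrite lerDl.
by case: eqP => _; rewrite ?le_max lexx.
Qed.

Lemma inAdj_neq0 {E A} : inAdj E A -> forall i j, (A i j != 0) = E i j.
Proof.
move=> AdjA i j; have [A0 posE] := AdjA i j; apply/idP/idP => [nz | Eij].
  by apply/posE; rewrite lt_def nz A0.
by rewrite gt_eqF //; apply/posE.
Qed.

Section Limits.
Context {T : Type} {F : set_system T} {FF : ProperFilter F}.

Lemma cvg_imbalance {M : T -> 'M[R]_n} {A} i :
  M @ F --> A -> (fun x => imbalance (M x) i) @ F --> imbalance A i.
Proof.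
move=> MA; apply: cvgB;
by apply: cvg_big => [|j _]; [exact: add_continuous | exact: cvg_mx_entry].
Qed.

Lemma cvg_imcor_entry {M : T -> 'M[R]_n} {A} i js j :
  M @ F --> A -> (fun x => imcor_entry (M x) i js j) @ F --> imcor_entry A i js j.
Proof.
move=> MA; apply: cvgD; first exact: cvg_mx_entry.
case: (j == js); last exact: cvg_cst.
apply: (cvg_comp _ _ (cvg_imbalance i MA)).
exact: (@continuous_max R R (cst 0) id _ (@cst_continuous _ _ _ _) (@cvg_id _ _)).
Qed.

Lemma inAdj_lim {E D C} {M : T -> 'M[R]_n} :
  inAdj E D -> (forall x, inAdj E (M x)) -> M @ F --> C ->
  (forall i j, D i j <= C i j) -> inAdj E C.
Proof.
move=> AdjD AdjM MC DC i j; split.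
  apply: (frequently_le_lim (cvg_cst 0) (cvg_mx_entry i j MC)).
  by apply: frequentlyW => x; have [] := AdjM x i j.
split=> [Cpos | Eij]; last by apply: lt_le_trans (DC i j); apply/(AdjD i j).2.
apply: contrapT => nE; suff C0 : C i j = 0 by rewrite C0 ltxx in Cpos.
apply: (frequently_eq_lim (cvg_mx_entry i j MC) (cvg_cst 0)).
apply: frequentlyW => x; apply/eqP; rewrite -[_ == 0]negbK (inAdj_neq0 (AdjM x)).
exact/negP.
Qed.

Lemma inJstar_lim {E D} {M : T -> 'M[R]_n} {i js} :
  inAdj E D -> (forall x, inAdj E (M x)) -> M @ F --> D ->
  frequently F (fun x => inJstar (M x) i js) -> inJstar D i js.
Proof.
move=> AdjD AdjM MD J.
have [x [jsi nz _]] := frequently_ex J.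
split=> //; first by rewrite (inAdj_neq0 AdjD) -(inAdj_neq0 (AdjM x)).
move=> l li Dl; apply: (frequently_le_lim (cvg_mx_entry i js MD) (cvg_mx_entry i l MD)).
apply: (frequentlyS _ J) => y [_ _]; apply=> //.
by rewrite (inAdj_neq0 (AdjM y)) -(inAdj_neq0 AdjD).
Qed.

End Limits.
End ImbalanceCorrection.

Theorem lemma4p1 (R : realType) (n : nat) (E : rel 'I_n) :
  strongly_connected E ->
  forall (D C : 'M[R]_n) (Dk Ck : nat -> 'M[R]_n),
    inAdj E D ->
    (forall k, inAdj E (Dk k)) ->
    (forall k, inAdj E (Ck k)) ->
    Dk @ \oo --> D ->
    Ck @ \oo --> C ->
    (forall k, in_fimcor E (Dk k) (Ck k)) ->
    in_fimcor E D C.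
Proof.
move=> _ D C Dk Ck AdjD AdjDk AdjCk DkD CkC fimcor.
apply/in_fimcorE; split.
  apply: (inAdj_lim AdjD AdjCk CkC) => i j.
  apply: (frequently_le_lim (cvg_mx_entry i j DkD) (cvg_mx_entry i j CkC)).
  by apply: frequentlyW => k; exact: in_fimcor_le (fimcor k) i j.
move=> i.
have rowk k : exists js,
    inJstar (Dk k) i js /\ forall j, Ck k i j = imcor_entry (Dk k) i js j.
  by have /in_fimcorE[_ /(_ i) [js Jjs Cj]] := fimcor k; exists js.
have [jsk {}rowk] := choice rowk.
have [js jskE] := frequently_constant (F := \oo) jsk.
exists js.
  apply: (inJstar_lim AdjD AdjDk DkD).
  by apply: (frequentlyS _ jskE) => k <-; exact: (rowk k).1.
move=> j; apply: (frequently_eq_lim (cvg_mx_entry i j CkC) (cvg_imcor_entry i js j DkD)).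
by apply: (frequentlyS _ jskE) => k <-; exact: (rowk k).2.
Qed.
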